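(* Let $a,c\in\mathbb{C}$ with $c\notin\{0,-1,-2,\dots\}$. Then for all $x\in\mathbb{C}$, $$\phi_2(a,a;c;x,-x)={}_1F_2\!\left[\begin{array}{c}a\\ \tfrac12 c,\ \tfrac12 c+\tfrac12\end{array};\frac{x^2}{4}\right]=\sum_{k=0}^\infty\frac{(a)_k}{(\tfrac12 c)_k(\tfrac12 c+\tfrac12)_k}\frac{(x^2/4)^k}{k!}.$$ In particular, if $2a\notin\{0,-1,-2,\dots\}$, then $$\phi_2(a,a;2a;x,-x)={}_0F_1\!\left[\begin{array}{c}-\\ a+\tfrac12\end{array};\frac{x^2}{4}\right]=\sum_{k=0}^\infty\frac{1}{(a+\tfrac12)_k}\frac{(x^2/4)^k}{k!}.$$
   Context: $(\lambda)_n=\Gamma(\lambda+n)/\Gamma(\lambda)$ denotes the Pochhammer symbol. Humbert's function $\phi_2$ is defined by $$\phi_2(a,b;c;x,y)=\sum_{n=0}^\infty\sum_{k=0}^\infty\frac{(a)_n(b)_k}{(c)_{n+k}}\frac{x^n y^k}{n!\,k!},$$ convergent for all $x,y\in\mathbb{C}$ when $c\notin\{0,-1,-2,\dots\}$. *)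

From Stdlib Require Import Reals Arith Factorial.
Open Scope R_scope.

Definition Cx : Type := (R * R)%type.

Definition RtoC (r : R) : Cx := (r, 0).
Definition Cadd (z w : Cx) : Cx := (fst z + fst w, snd z + snd w).
Definition Copp (z : Cx) : Cx := (- fst z, - snd z).
Definition Csub (z w : Cx) : Cx := Cadd z (Copp w).
Definition Cmul (z w : Cx) : Cx :=
  (fst z * fst w - snd z * snd w, fst z * snd w + snd z * fst w).
Definition Cinv (z : Cx) : Cx :=
  let d := fst z * fst z + snd z * snd z in (fst z / d, - snd z / d).
Definition Cdiv (z w : Cx) : Cx := Cmul z (Cinv w).
Definition Cmod (z : Cx) : R := sqrt (fst z * fst z + snd z * snd z).
Definition C0 : Cx := RtoC 0.
Definition C1 : Cx := RtoC 1.
Definition natC (n : nat) : Cx := RtoC (INR n).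

Fixpoint Cpow (z : Cx) (n : nat) : Cx :=
  match n with O => C1 | S m => Cmul (Cpow z m) z end.

Fixpoint poch (l : Cx) (n : nat) : Cx :=
  match n with O => C1 | S m => Cmul (poch l m) (Cadd l (natC m)) end.

Fixpoint Csum (f : nat -> Cx) (N : nat) : Cx :=
  match N with O => f O | S M => Cadd (Csum f M) (f (S M)) end.

Definition Cseq_cv (u : nat -> Cx) (L : Cx) : Prop :=
  forall eps : R, eps > 0 -> exists N : nat, forall n : nat, (n >= N)%nat ->
    Cmod (Csub (u n) L) < eps.

Definition not_nonpos_int (z : Cx) : Prop := forall m : nat, z <> RtoC (- INR m).

Definition phi2_term (a b c x y : Cx) (n k : nat) : Cx :=
  Cdiv (Cmul (Cmul (poch a n) (poch b k)) (Cmul (Cpow x n) (Cpow y k)))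
       (Cmul (poch c (n + k)) (natC (fact n * fact k))).

(* Triangular partial sums: sum over n + k <= N. *)
Definition phi2_partial (a b c x y : Cx) (N : nat) : Cx :=
  Csum (fun M => Csum (fun n => phi2_term a b c x y n (M - n)) M) N.

Definition phi2_sums_to (a b c x y L : Cx) : Prop :=
  Cseq_cv (phi2_partial a b c x y) L.

Definition series_sums_to (t : nat -> Cx) (L : Cx) : Prop :=
  Cseq_cv (Csum t) L.

Definition half : Cx := RtoC (1/2).

Definition F12_term (a b1 b2 z : Cx) (k : nat) : Cx :=
  Cdiv (Cmul (poch a k) (Cpow z k))
       (Cmul (Cmul (poch b1 k) (poch b2 k)) (natC (fact k))).

Definition F01_term (b z : Cx) (k : nat) : Cx :=
  Cdiv (Cpow z k) (Cmul (poch b k) (natC (fact k))).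

From Stdlib Require Import Reals Lra Lia Field Factorial.
From Coquelicot Require Import Coquelicot.
Open Scope R_scope.

(* With [y = -x] the terms of phi_2 with [n + k = M] add up to [x^M / (c)_M] times the
   coefficient of [z^M] in [(1 - z)^(-a) (1 + z)^(-a) = (1 - z^2)^(-a)], which is
   [(a)_m / m!] for [M = 2m] and [0] for odd [M].  This identity is proved on coefficients:
   the convolution satisfies the recurrence coming from [(1 - z^2) w' = 2 a z w].  Together
   with [(c)_(2m) = 4^m (c/2)_m (c/2 + 1/2)_m], the triangular partial sums of phi_2 are the
   partial sums of the 1F2 series up to [N/2], and the latter converges by the ratio test.
   For [c = 2a] the factor [(a)_k] cancels, leaving 0F1. *)

Lemma Cx_ext (z w : Cx) : fst z = fst w -> snd z = snd w -> z = w.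
Proof. destruct z, w; simpl; intros; subst; reflexivity. Qed.

Lemma Cx_ring : ring_theory C0 C1 Cadd Cmul Csub Copp (@eq Cx).
Proof.
  constructor; intros; repeat match goal with z : Cx |- _ => destruct z end;
    apply Cx_ext; unfold Cadd, Cmul, Csub, Copp, C0, C1, RtoC; simpl; ring.
Qed.

Lemma Cx_field : field_theory C0 C1 Cadd Cmul Csub Copp Cdiv Cinv (@eq Cx).
Proof.
  constructor.
  - exact Cx_ring.
  - intro H. injection H. lra.
  - reflexivity.
  - intros [a b] Hab.
    assert (Hd : a * a + b * b <> 0).
    { intro H. apply Hab. assert (a = 0) by nra. assert (b = 0) by nra. subst. reflexivity. }
    apply Cx_ext; unfold Cmul, Cinv, C1, RtoC; simpl; field; exact Hd.
Qed.

Add Field Cx_field_inst : Cx_field.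

Lemma Cmul_neq0 z w : z <> C0 -> w <> C0 -> Cmul z w <> C0.
Proof.
  intros Hz Hw E. apply Hz.
  replace z with (Cmul (Cmul z w) (Cinv w)) by (field; exact Hw).
  rewrite E. ring.
Qed.

Lemma Cmul_neq0_l z w : Cmul z w <> C0 -> z <> C0.
Proof. intros H E. apply H. rewrite E. ring. Qed.

Lemma Cmul_neq0_r z w : Cmul z w <> C0 -> w <> C0.
Proof. intros H E. apply H. rewrite E. ring. Qed.

Lemma Cmul_reg_l z u v : z <> C0 -> Cmul z u = Cmul z v -> u = v.
Proof.
  intros Hz E.
  replace u with (Cmul (Cinv z) (Cmul z u)) by (field; exact Hz).
  rewrite E. field. exact Hz.
Qed.

Lemma natC_add m n : natC (m + n) = Cadd (natC m) (natC n).
Proof. unfold natC, RtoC, Cadd. rewrite plus_INR. apply Cx_ext; simpl; ring. Qed.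

Lemma natC_mul m n : natC (m * n) = Cmul (natC m) (natC n).
Proof. unfold natC, RtoC, Cmul. rewrite mult_INR. apply Cx_ext; simpl; ring. Qed.

Lemma natC_S n : natC (S n) = Cadd (natC n) C1.
Proof. rewrite <- Nat.add_1_r, natC_add. reflexivity. Qed.

Lemma natC_neq0 n : n <> 0%nat -> natC n <> C0.
Proof. intros H E. injection E. apply not_0_INR. exact H. Qed.

Lemma natC_S_neq0 n : natC (S n) <> C0.
Proof. apply natC_neq0. lia. Qed.

Lemma natC_fact_neq0 n : natC (fact n) <> C0.
Proof. apply natC_neq0, fact_neq_0. Qed.

Lemma Cpow_add z m n : Cpow z (m + n) = Cmul (Cpow z m) (Cpow z n).
Proof.
  induction n as [|n IH]; simpl.
  - rewrite Nat.add_0_r. ring.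
  - rewrite Nat.add_succ_r. simpl. rewrite IH. ring.
Qed.

Lemma Cpow_mul z w n : Cpow (Cmul z w) n = Cmul (Cpow z n) (Cpow w n).
Proof. induction n as [|n IH]; simpl; [ring | rewrite IH; ring]. Qed.

Lemma Cpow_neq0 z n : z <> C0 -> Cpow z n <> C0.
Proof.
  intros Hz. induction n as [|n IH]; simpl.
  - intro E. injection E. lra.
  - apply Cmul_neq0; assumption.
Qed.

Lemma Cpow_div z w n : w <> C0 -> Cpow (Cdiv z w) n = Cdiv (Cpow z n) (Cpow w n).
Proof.
  intros Hw. induction n as [|n IH]; simpl.
  - field. intro E. injection E. lra.
  - rewrite IH. field. split; [exact Hw | apply Cpow_neq0; exact Hw].
Qed.

Lemma poch_neq0 c n : not_nonpos_int c -> poch c n <> C0.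
Proof.
  intros Hc. induction n as [|n IH]; simpl.
  - intro E. injection E. lra.
  - apply Cmul_neq0; [exact IH |]. intro E. apply (Hc n).
    destruct c as [c1 c2]. injection E. intros.
    apply Cx_ext; simpl; lra.
Qed.

Lemma Csum_ext f g N : (forall n, (n <= N)%nat -> f n = g n) -> Csum f N = Csum g N.
Proof.
  induction N as [|N IH]; intros H; simpl.
  - apply H. lia.
  - rewrite IH, H; auto.
Qed.

Lemma Csum_add f g N : Csum (fun n => Cadd (f n) (g n)) N = Cadd (Csum f N) (Csum g N).
Proof. induction N as [|N IH]; simpl; [reflexivity | rewrite IH; ring]. Qed.

Lemma Csum_sub f g N : Csum (fun n => Csub (f n) (g n)) N = Csub (Csum f N) (Csum g N).
Proof. induction N as [|N IH]; simpl; [reflexivity | rewrite IH; ring]. Qed.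

Lemma Csum_scal z f N : Csum (fun n => Cmul z (f n)) N = Cmul z (Csum f N).
Proof. induction N as [|N IH]; simpl; [reflexivity | rewrite IH; ring]. Qed.

Lemma Csum_Sl f N : Csum f (S N) = Cadd (f 0%nat) (Csum (fun n => f (S n)) N).
Proof.
  induction N as [|N IH]; [reflexivity |].
  change (Csum f (S (S N))) with (Cadd (Csum f (S N)) (f (S (S N)))).
  rewrite IH. simpl. ring.
Qed.

Lemma Csum_even_odd f g :
  (forall m, f (m + m)%nat = g m) -> (forall m, f (S (m + m)) = C0) ->
  forall N, Csum f N = Csum g (Nat.div2 N).
Proof.
  intros Heven Hodd.
  assert (Hpair : forall m, Csum f (m + m) = Csum g m /\ Csum f (S (m + m)) = Csum g m).
  { induction m as [|m [_ IH]].
    - pose proof (Heven 0%nat) as H0. pose proof (Hodd 0%nat) as H1. simpl in *.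
      rewrite <- H0, H1. split; [reflexivity | ring].
    - replace (S m + S m)%nat with (S (S (m + m))) by lia.
      assert (Hs : Csum f (S (S (m + m))) = Csum g (S m)).
      { change (Csum f (S (S (m + m)))) with (Cadd (Csum f (S (m + m))) (f (S (S (m + m))))).
        rewrite IH. replace (S (S (m + m))) with (S m + S m)%nat by lia.
        rewrite Heven. reflexivity. }
      split; [exact Hs |].
      change (Csum f (S (S (S (m + m)))))
        with (Cadd (Csum f (S (S (m + m)))) (f (S (S (S (m + m)))))).
      rewrite Hs. replace (S (S (m + m))) with (S m + S m)%nat by lia.
      rewrite Hodd. ring. }
  intros N. destruct (Nat.Even_or_Odd N) as [[m ->] | [m ->]].
  - rewrite Nat.div2_double. replace (2 * m)%nat with (m + m)%nat by lia. apply Hpair.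
  - rewrite Nat.add_1_r, Nat.div2_succ_double. replace (2 * m)%nat with (m + m)%nat by lia.
    apply Hpair.
Qed.

Definition Cconv (f g : nat -> Cx) (M : nat) : Cx :=
  Csum (fun n => Cmul (f n) (g (M - n)%nat)) M.

Definition Cderiv (f : nat -> Cx) (n : nat) : Cx := Cmul (natC (S n)) (f (S n)).

Lemma Cconv_Cderiv_l f g M :
  Cconv (Cderiv f) g M = Csum (fun n => Cmul (natC n) (Cmul (f n) (g (S M - n)%nat))) (S M).
Proof.
  rewrite Csum_Sl. change (natC 0) with C0. unfold Cconv, Cderiv.
  transitivity (Csum (fun n => Cmul (natC (S n)) (Cmul (f (S n)) (g (S M - S n)%nat))) M).
  - apply Csum_ext. intros n _. simpl. ring.
  - ring.
Qed.

Lemma Cconv_Cderiv_r f g M :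
  Cconv f (Cderiv g) M
  = Csum (fun n => Cmul (natC (S M - n)) (Cmul (f n) (g (S M - n)%nat))) (S M).
Proof.
  change (Csum ?F (S M)) with (Cadd (Csum F M) (F (S M))). cbv beta.
  rewrite Nat.sub_diag. change (natC 0) with C0. unfold Cconv, Cderiv.
  transitivity (Csum (fun n => Cmul (natC (S M - n)) (Cmul (f n) (g (S M - n)%nat))) M).
  - apply Csum_ext. intros n Hn. rewrite <- Nat.sub_succ_l by lia. ring.
  - ring.
Qed.

Section ConvolutionRecurrence.

Variable a : Cx.
Variables u v : nat -> Cx.
Hypothesis Cderiv_u : forall n, Cderiv u n = Cmul (Cadd (natC n) a) (u n).
Hypothesis Cderiv_v : forall n, Cderiv v n = Copp (Cmul (Cadd (natC n) a) (v n)).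

(* [u] and [v] are the coefficients of solutions of [(1 - z) w' = a w] and [(1 + z) w' = - a w]. *)
Lemma Cconv_rec M :
  Cmul (natC (S (S M))) (Cconv u v (S (S M)))
  = Cmul (Cadd (natC M) (Cadd a a)) (Cconv u v M).
Proof.
  assert (Hleibniz : Cmul (natC (S (S M))) (Cconv u v (S (S M)))
                     = Cadd (Cconv (Cderiv u) v (S M)) (Cconv u (Cderiv v) (S M))).
  { rewrite Cconv_Cderiv_l, Cconv_Cderiv_r, <- Csum_add. unfold Cconv. rewrite <- Csum_scal.
    apply Csum_ext. intros n Hn.
    replace (natC (S (S M))) with (Cadd (natC n) (natC (S (S M) - n)))
      by (rewrite <- natC_add; f_equal; lia).
    ring. }
  assert (Hshift : Cadd (Cconv (Cderiv u) v (S M)) (Cconv u (Cderiv v) (S M))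
                   = Csub (Cconv (Cderiv u) v M) (Cconv u (Cderiv v) M)).
  { rewrite (Cconv_Cderiv_l u v M), (Cconv_Cderiv_r u v M), <- Csum_sub.
    unfold Cconv. rewrite <- Csum_add.
    apply Csum_ext. intros n _. rewrite Cderiv_u, Cderiv_v. ring. }
  rewrite Hleibniz, Hshift. unfold Cconv. rewrite <- Csum_sub, <- Csum_scal.
  apply Csum_ext. intros n Hn. rewrite Cderiv_u, Cderiv_v.
  replace (natC M) with (Cadd (natC n) (natC (M - n))) by (rewrite <- natC_add; f_equal; lia).
  ring.
Qed.

End ConvolutionRecurrence.

(* [nbinom a n] is the coefficient of [z^n] in [(1 - z)^(-a)]. *)
Definition nbinom (a : Cx) (n : nat) : Cx := Cdiv (poch a n) (natC (fact n)).

Definition Calt (f : nat -> Cx) (n : nat) : Cx := Cmul (Cpow (Copp C1) n) (f n).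

Lemma Cderiv_nbinom a n : Cderiv (nbinom a) n = Cmul (Cadd (natC n) a) (nbinom a n).
Proof.
  unfold Cderiv, nbinom. simpl poch. change (fact (S n)) with (S n * fact n)%nat.
  rewrite natC_mul. field. split; [apply natC_fact_neq0 | apply natC_S_neq0].
Qed.

Lemma Cderiv_Calt f n : Cderiv (Calt f) n = Copp (Calt (Cderiv f) n).
Proof. unfold Cderiv, Calt. simpl Cpow. ring. Qed.

Lemma nbinom_0 a : nbinom a 0 = C1.
Proof. unfold nbinom, Cdiv, Cinv. apply Cx_ext; simpl; field. Qed.

(* The coefficient form of [(1 - z)^(-a) (1 + z)^(-a) = (1 - z^2)^(-a)]. *)
Lemma Cconv_nbinom a m :
  Cconv (nbinom a) (Calt (nbinom a)) (m + m) = nbinom a m /\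
  Cconv (nbinom a) (Calt (nbinom a)) (S (m + m)) = C0.
Proof.
  assert (Hrec : forall M,
    Cmul (natC (S (S M))) (Cconv (nbinom a) (Calt (nbinom a)) (S (S M)))
    = Cmul (Cadd (natC M) (Cadd a a)) (Cconv (nbinom a) (Calt (nbinom a)) M)).
  { apply Cconv_rec; [apply Cderiv_nbinom |].
    intro n. rewrite Cderiv_Calt. unfold Calt. rewrite Cderiv_nbinom. ring. }
  induction m as [|m [Heven Hodd]].
  - pose proof (Cderiv_nbinom a 0) as H1. unfold Cderiv in H1.
    change (natC 1) with C1 in H1. change (natC 0) with C0 in H1.
    unfold Cconv, Calt. simpl. rewrite nbinom_0. split; [ring |].
    replace (nbinom a 1) with (Cmul C1 (nbinom a 1)) by ring. rewrite H1, nbinom_0. ring.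
  - replace (S m + S m)%nat with (S (S (m + m))) by lia. split.
    + apply (Cmul_reg_l (natC (S (S (m + m))))); [apply natC_S_neq0 |].
      rewrite Hrec, Heven.
      replace (Cmul (natC (S (S (m + m)))) (nbinom a (S m)))
        with (Cadd (Cderiv (nbinom a) m) (Cderiv (nbinom a) m)).
      * rewrite Cderiv_nbinom, natC_add. ring.
      * unfold Cderiv. replace (S (S (m + m))) with (S m + S m)%nat by lia.
        rewrite natC_add. ring.
    + apply (Cmul_reg_l (natC (S (S (S (m + m)))))); [apply natC_S_neq0 |].
      rewrite Hrec, Hodd. ring.
Qed.

Lemma phi2_term_opp a c x n k : poch c (n + k) <> C0 ->
  phi2_term a a c x (Copp x) n k
  = Cmul (Cdiv (Cpow x (n + k)) (poch c (n + k))) (Cmul (nbinom a n) (Calt (nbinom a) k)).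
Proof.
  intros Hc. unfold phi2_term, nbinom, Calt.
  replace (Copp x) with (Cmul (Copp C1) x) by ring.
  rewrite Cpow_add, Cpow_mul, natC_mul.
  field. repeat split; auto using natC_fact_neq0.
Qed.

Lemma phi2_partial_opp a c x N : not_nonpos_int c ->
  phi2_partial a a c x (Copp x) N
  = Csum (fun M => Cmul (Cdiv (Cpow x M) (poch c M)) (Cconv (nbinom a) (Calt (nbinom a)) M)) N.
Proof.
  intros Hc. unfold phi2_partial. apply Csum_ext. intros M _.
  unfold Cconv. rewrite <- Csum_scal. apply Csum_ext. intros n Hn.
  rewrite phi2_term_opp by apply poch_neq0, Hc.
  replace (n + (M - n))%nat with M by lia. reflexivity.
Qed.

Lemma two_neq0 : Cadd C1 C1 <> C0.
Proof. intro E. injection E. lra. Qed.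

Lemma half_inv2 : half = Cinv (Cadd C1 C1).
Proof. apply Cx_ext; unfold half, Cinv, Cadd, C1, RtoC; simpl; field. Qed.

Lemma RtoC_4 : RtoC 4 = Cmul (Cadd C1 C1) (Cadd C1 C1).
Proof. apply Cx_ext; unfold Cmul, Cadd, C1, RtoC; simpl; ring. Qed.

Lemma poch_duplication c m :
  poch c (m + m)
  = Cmul (Cpow (RtoC 4) m) (Cmul (poch (Cmul half c) m) (poch (Cadd (Cmul half c) half) m)).
Proof.
  induction m as [|m IH]; [simpl; ring |].
  replace (S m + S m)%nat with (S (S (m + m))) by lia.
  simpl poch. simpl Cpow. rewrite IH, natC_S, natC_add, RtoC_4, half_inv2.
  field. exact two_neq0.
Qed.

Lemma poch_half_neq0 c m : not_nonpos_int c ->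
  poch (Cmul half c) m <> C0 /\ poch (Cadd (Cmul half c) half) m <> C0.
Proof.
  intros Hc. pose proof (poch_neq0 c (m + m) Hc) as H. rewrite poch_duplication in H.
  apply Cmul_neq0_r in H. split; [eapply Cmul_neq0_l | eapply Cmul_neq0_r]; exact H.
Qed.

Lemma phi2_partial_opp_F12 a c x N : not_nonpos_int c ->
  phi2_partial a a c x (Copp x) N
  = Csum (F12_term a (Cmul half c) (Cadd (Cmul half c) half) (Cdiv (Cmul x x) (RtoC 4)))
         (Nat.div2 N).
Proof.
  intros Hc. rewrite phi2_partial_opp by exact Hc.
  apply Csum_even_odd; intro m.
  - destruct (poch_half_neq0 c m Hc) as [H1 H2].
    assert (H4 : RtoC 4 <> C0) by (intro E; injection E; lra).
    unfold F12_term.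
    rewrite (proj1 (Cconv_nbinom a m)), poch_duplication, Cpow_add, Cpow_div, Cpow_mul by exact H4.
    unfold nbinom. field.
    repeat split; auto using natC_fact_neq0, Cpow_neq0.
  - rewrite (proj2 (Cconv_nbinom a m)). ring.
Qed.

Lemma Cmod_Complex z : Cmod z = Complex.Cmod z.
Proof. unfold Cmod, Complex.Cmod. f_equal. simpl. ring. Qed.

Lemma Cmod_Cmul z w : Cmod (Cmul z w) = Cmod z * Cmod w.
Proof. rewrite !Cmod_Complex. apply Cmod_mult. Qed.

Lemma Cmod_Cadd_le z w : Cmod (Cadd z w) <= Cmod z + Cmod w.
Proof. rewrite !Cmod_Complex. apply Cmod_triangle. Qed.

Lemma Cmod_ge0 z : 0 <= Cmod z.
Proof. rewrite Cmod_Complex. apply Cmod_ge_0. Qed.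

Lemma Cmod_natC n : Cmod (natC n) = INR n.
Proof.
  rewrite Cmod_Complex. change (Complex.Cmod (Complex.RtoC (INR n)) = INR n).
  rewrite Cmod_R. apply Rabs_pos_eq, pos_INR.
Qed.

Lemma Cmod_add_natC_ge b n : INR n - Cmod b <= Cmod (Cadd b (natC n)).
Proof.
  pose proof (Cmod_Cadd_le (Cadd b (natC n)) (Copp b)) as H.
  replace (Cadd (Cadd b (natC n)) (Copp b)) with (natC n) in H by ring.
  rewrite Cmod_natC in H. rewrite !Cmod_Complex in *. rewrite Cmod_opp in H. lra.
Qed.

Lemma Cmod_add_natC_le a n : Cmod (Cadd a (natC n)) <= Cmod a + INR n.
Proof. rewrite <- Cmod_natC. apply Cmod_Cadd_le. Qed.

Lemma is_series_sums_to (t : nat -> Cx) L :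
  @is_series C_AbsRing C_NormedModule t L -> series_sums_to t L.
Proof.
  intros Ht eps Heps.
  destruct (proj1 (filterlim_locally_ball_norm _ _) Ht (mkposreal eps Heps)) as [N HN].
  exists N. intros n Hn. specialize (HN n Hn).
  change (Complex.Cmod (Csub (@sum_n C_AbelianMonoid t n) L) < eps) in HN.
  assert (Hsum : @sum_n C_AbelianMonoid t n = Csum t n).
  { clear. induction n as [|n IH]; [rewrite sum_O | rewrite sum_Sn, IH]; reflexivity. }
  rewrite Hsum in HN. rewrite Cmod_Complex. exact HN.
Qed.

Lemma series_sums_to_ratio_half (t : nat -> Cx) K :
  (forall m, (K <= m)%nat -> Cmod (t (S m)) <= / 2 * Cmod (t m)) ->
  exists L, series_sums_to t L.
Proof.
  intros Hratio.
  assert (Hgeom : forall j, Cmod (t (K + j)%nat) <= Cmod (t K) * (/ 2) ^ j).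
  { induction j as [|j IH].
    - rewrite Nat.add_0_r. simpl. lra.
    - rewrite Nat.add_succ_r. eapply Rle_trans; [apply Hratio; lia |].
      simpl. pose proof (Cmod_ge0 (t (K + j)%nat)). nra. }
  assert (Htail : @ex_series C_AbsRing C_NormedModule (fun j => t (K + j)%nat)).
  { apply (@ex_series_le C_AbsRing C_CompleteNormedModule _ (fun j => Cmod (t K) * (/ 2) ^ j)).
    - intro j. rewrite <- Cmod_Complex. apply Hgeom.
    - apply (@ex_series_scal_l R_AbsRing R_NormedModule (Cmod (t K)) (fun j => (/ 2) ^ j)).
      apply ex_series_geom. rewrite Rabs_pos_eq; lra. }
  apply ex_series_incr_n in Htail. destruct Htail as [L HL].
  exists L. apply is_series_sums_to. exact HL.
Qed.

Lemma F12_term_succ a b1 b2 z m : poch b1 (S m) <> C0 -> poch b2 (S m) <> C0 ->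
  Cmul (F12_term a b1 b2 z (S m))
       (Cmul (Cmul (Cadd b1 (natC m)) (Cadd b2 (natC m))) (natC (S m)))
  = Cmul (F12_term a b1 b2 z m) (Cmul (Cadd a (natC m)) z).
Proof.
  intros H1 H2. unfold F12_term. simpl poch in *. simpl Cpow.
  change (fact (S m)) with (S m * fact m)%nat. rewrite natC_mul.
  field. repeat split;
    eauto using natC_fact_neq0, natC_S_neq0, Cmul_neq0_l, Cmul_neq0_r.
Qed.

Lemma F12_term_ratio_half a b1 b2 z :
  (forall m, poch b1 m <> C0) -> (forall m, poch b2 m <> C0) ->
  exists K, forall m, (K <= m)%nat ->
    Cmod (F12_term a b1 b2 z (S m)) <= / 2 * Cmod (F12_term a b1 b2 z m).
Proof.
  intros Hb1 Hb2.
  (* Beyond [K]: [|b_i + m| >= m/2], [|a + m| <= 2m] and [|z| <= m/16]. *)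
  destruct (INR_unbounded (2 * Cmod b1 + 2 * Cmod b2 + Cmod a + 16 * Cmod z + 1)) as [K HK].
  exists K. intros m Hm. apply le_INR in Hm.
  pose proof (f_equal Cmod (F12_term_succ a b1 b2 z m (Hb1 (S m)) (Hb2 (S m)))) as E.
  rewrite !Cmod_Cmul, Cmod_natC, S_INR in E.
  pose proof (Cmod_add_natC_ge b1 m). pose proof (Cmod_add_natC_ge b2 m).
  pose proof (Cmod_add_natC_le a m).
  pose proof (Cmod_ge0 a). pose proof (Cmod_ge0 b1). pose proof (Cmod_ge0 b2).
  pose proof (Cmod_ge0 z). pose proof (Cmod_ge0 (Cadd a (natC m))).
  pose proof (Cmod_ge0 (F12_term a b1 b2 z m)). pose proof (Cmod_ge0 (F12_term a b1 b2 z (S m))).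
  set (x := INR m) in *.
  set (D1 := Cmod (Cadd b1 (natC m))) in *. set (D2 := Cmod (Cadd b2 (natC m))) in *.
  set (t0 := Cmod (F12_term a b1 b2 z m)) in *. set (t1 := Cmod (F12_term a b1 b2 z (S m))) in *.
  assert (Hden : x * x / 4 <= D1 * D2 * (x + 1)).
  { assert (x / 2 * (x / 2) <= D1 * D2) by (apply Rmult_le_compat; lra). nra. }
  assert (Hnum : Cmod (Cadd a (natC m)) * Cmod z <= x * x / 8).
  { apply Rle_trans with (2 * x * (x / 16)); [apply Rmult_le_compat | ]; lra. }
  assert (Hsq : 0 < x * x) by nra.
  apply Rmult_le_reg_r with (x * x); [exact Hsq |].
  assert (t1 * (x * x / 4) <= t0 * (x * x / 8)).
  { apply Rle_trans with (t1 * (D1 * D2 * (x + 1))); [apply Rmult_le_compat_l; lra |].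
    rewrite E. apply Rmult_le_compat_l; lra. }
  lra.
Qed.

Lemma Cseq_cv_div2 u v L :
  (forall N, v N = u (Nat.div2 N)) -> Cseq_cv u L -> Cseq_cv v L.
Proof.
  intros Hv Hu eps Heps. destruct (Hu eps Heps) as [N HN].
  exists (2 * N)%nat. intros n Hn. rewrite Hv. apply HN.
  rewrite Nat.div2_div. apply Nat.div_le_lower_bound; lia.
Qed.

Lemma phi2_opp_sums_to_F12 a c x : not_nonpos_int c ->
  exists L, phi2_sums_to a a c x (Copp x) L /\
    series_sums_to
      (F12_term a (Cmul half c) (Cadd (Cmul half c) half) (Cdiv (Cmul x x) (RtoC 4))) L.
Proof.
  intros Hc.
  destruct (F12_term_ratio_half a (Cmul half c) (Cadd (Cmul half c) half)
              (Cdiv (Cmul x x) (RtoC 4)))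
    as [K HK]; [intro m; apply (poch_half_neq0 c m Hc) .. |].
  destruct (series_sums_to_ratio_half _ K HK) as [L HL].
  exists L. split; [| exact HL].
  apply (Cseq_cv_div2 _ _ _ (fun N => phi2_partial_opp_F12 a c x N Hc)). exact HL.
Qed.

Lemma series_sums_to_ext t s L :
  series_sums_to t L -> (forall k, t k = s k) -> series_sums_to s L.
Proof.
  intros Ht Hts eps Heps. destruct (Ht eps Heps) as [N HN].
  exists N. intros n Hn. rewrite <- (Csum_ext t s n) by auto. apply HN, Hn.
Qed.

Lemma half_double a : Cmul half (Cmul (RtoC 2) a) = a.
Proof. destruct a. apply Cx_ext; unfold half, Cmul, RtoC; simpl; field. Qed.

Lemma F12_term_F01_term a b z k : poch a k <> C0 -> poch b k <> C0 ->
  F12_term a a b z k = F01_term b z k.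
Proof.
  intros Ha Hb. unfold F12_term, F01_term. field.
  repeat split; auto using natC_fact_neq0.
Qed.

Theorem mainTheorem3 :
  (forall (a c : Cx), not_nonpos_int c -> forall x : Cx,
     exists L : Cx,
       phi2_sums_to a a c x (Copp x) L /\
       series_sums_to
         (F12_term a (Cmul half c) (Cadd (Cmul half c) half)
                   (Cdiv (Cmul x x) (RtoC 4))) L)
  /\
  (forall a : Cx, not_nonpos_int (Cmul (RtoC 2) a) -> forall x : Cx,
     exists L : Cx,
       phi2_sums_to a a (Cmul (RtoC 2) a) x (Copp x) L /\
       series_sums_to
         (F01_term (Cadd a half) (Cdiv (Cmul x x) (RtoC 4))) L).
Proof.
  split; intros a.
  - intros c Hc x. exact (phi2_opp_sums_to_F12 a c x Hc).
  - intros H2a x. destruct (phi2_opp_sums_to_F12 a _ x H2a) as [L [Hphi2 HF12]].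
    rewrite !half_double in HF12.
    exists L. split; [exact Hphi2 |].
    apply (series_sums_to_ext _ _ _ HF12). intro k.
    pose proof (poch_half_neq0 _ k H2a) as [Ha Hb]. rewrite half_double in Ha, Hb.
    apply F12_term_F01_term; assumption.
Qed.
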